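(* Let $M=\{u=F(z,\zeta,\bar z,\bar\zeta)\}\subset\mathbb{C}^3$ be a rigid real-analytic hypersurface through the origin whose Levi form has constant rank $1$ near $0$ (i.e. $F_{z\bar z}F_{\zeta\bar\zeta}-F_{\zeta\bar z}F_{z\bar\zeta}\equiv0$), and which is prenormalized, i.e. $F(z,\zeta,\bar z,0)=z\bar z+\frac12\zeta\bar z^2+O_{\bar z}(3)$. Let $m:=\frac{z\bar z+\frac12z^2\bar\zeta+\frac12\bar z^2\zeta}{1-\zeta\bar\zeta}$ and $G:=F-m$. Then $G=O_{z,\bar z}(3)$, i.e. every monomial $z^a\zeta^b\bar z^c\bar\zeta^d$ occurring in the Taylor expansion of $G$ at $0$ has $a+c\geq3$.
   Context: Coordinates on $\mathbb{C}^3$ are $(z,\zeta,w)$, $w=u+iv$; $F$ is real-valued. $O_{\bar z}(3)$ denotes $\bar z^3\cdot(\text{convergent power series in }(z,\zeta,\bar z,\bar\zeta))$. *)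

From HB Require Import structures.
From mathcomp Require Import all_boot all_order all_algebra.
From mathcomp Require Import reals.
From mathcomp Require Import complex.
Set Implicit Arguments. Unset Strict Implicit. Unset Printing Implicit Defensive.
Import Order.TTheory GRing.Theory Num.Theory.
Local Open Scope ring_scope.
Local Open Scope complex_scope.

(* A power series in the variables (z, zeta, zbar, zetabar), given by its
   coefficients: s a b c d is the coefficient of z^a zeta^b zbar^c zetabar^d. *)
Definition pseries (R : realType) := nat -> nat -> nat -> nat -> R[i].

(* Convergence (on some polydisc around 0): Cauchy-type coefficient bounds. *)
Definition convergent (R : realType) (s : pseries R) : Prop :=
  exists r K : R, 0 < r /\
    forall a b c d, `|s a b c d| * (r%:C) ^+ (a + b + c + d) <= K%:C.

(* Real-valuedness of the function (z,zeta) |-> s(z,zeta,conj z,conj zeta):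
   conjugating swaps (z,zeta) with (zbar,zetabar). *)
Definition real_valued (R : realType) (s : pseries R) : Prop :=
  forall a b c d, (s a b c d)^* = s c d a b.

Definition d_z (R : realType) (s : pseries R) : pseries R :=
  fun a b c d => (a.+1)%:R * s a.+1 b c d.
Definition d_zeta (R : realType) (s : pseries R) : pseries R :=
  fun a b c d => (b.+1)%:R * s a b.+1 c d.
Definition d_zbar (R : realType) (s : pseries R) : pseries R :=
  fun a b c d => (c.+1)%:R * s a b c.+1 d.
Definition d_zetabar (R : realType) (s : pseries R) : pseries R :=
  fun a b c d => (d.+1)%:R * s a b c d.+1.

Definition ps_mul (R : realType) (f g : pseries R) : pseries R :=
  fun a b c d =>
    \sum_(i < a.+1) \sum_(j < b.+1) \sum_(k < c.+1) \sum_(l < d.+1)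
      f i j k l * g (a - i)%N (b - j)%N (c - k)%N (d - l)%N.
Definition ps_sub (R : realType) (f g : pseries R) : pseries R :=
  fun a b c d => f a b c d - g a b c d.

Definition levi_det (R : realType) (F : pseries R) : pseries R :=
  ps_sub (ps_mul (d_zbar (d_z F)) (d_zetabar (d_zeta F)))
         (ps_mul (d_zbar (d_zeta F)) (d_zetabar (d_z F))).

(* Prenormalization: F(z,zeta,zbar,0) = z zbar + 1/2 zeta zbar^2 + O_zbar(3),
   i.e. the coefficients with d = 0 and c <= 2 are those of z zbar + 1/2 zeta zbar^2. *)
Definition prenormalized (R : realType) (F : pseries R) : Prop :=
  forall a b c, (c <= 2)%N ->
    F a b c 0%N =
      (if [&& a == 1%N, b == 0%N & c == 1%N] then 1 else 0)
    + (if [&& a == 0%N, b == 1%N & c == 2%N] then 2^-1 else 0).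

Definition m_num (R : realType) : pseries R :=
  fun a b c d =>
      (if [&& a == 1%N, b == 0%N, c == 1%N & d == 0%N] then 1 else 0)
    + (if [&& a == 2%N, b == 0%N, c == 0%N & d == 1%N] then 2^-1 else 0)
    + (if [&& a == 0%N, b == 1%N, c == 2%N & d == 0%N] then 2^-1 else 0).

(* 1/(1 - zeta zetabar) = sum_k (zeta zetabar)^k. *)
Definition geom_zz (R : realType) : pseries R :=
  fun a b c d => if [&& a == 0%N, c == 0%N & b == d] then 1 else 0.

Definition m_series (R : realType) : pseries R := ps_mul (@m_num R) (@geom_zz R).

(* Write w = a + c for the weight of the monomial z^a zeta^b zbar^c zetabar^d.
   In the coefficient of z^a zeta^b zbar^c zetabar^d (w <= 2) of the Levi determinant,
   F_{1010} (b+1) (d+1) F_{a,b+1,c,d+1} is the only product involving a coefficient of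
   weight <= 2 and degree a + b + c + d + 2; every other product consists of coefficients
   of lower degree and weight <= 2, or contains a factor of weight <= 1.  Since
   F_{1010} = 1, induction on the degree shows that the coefficients of weight <= 2
   are determined by those with b = 0 or d = 0, which prenormalization and reality fix.
   The model m meets the same constraints: its coefficients of weight <= 1 vanish and
   its Levi determinant vanishes in weight 2 by explicit convolution identities.  Hence
   F and m agree in weight <= 2. *)

From HB Require Import structures.
From mathcomp Require Import all_boot all_order all_algebra.
From mathcomp Require Import reals complex.
From mathcomp Require Import ring zify.
Import Order.TTheory GRing.Theory Num.Theory.
Local Open Scope ring_scope.

Section BoxSums.
Variable V : zmodType.
Implicit Types h : nat -> nat -> nat -> nat -> V.

Lemma sum_ord_only1 n x (H : nat -> V) :
  (forall i, (i < n)%N -> i != x -> H i = 0) ->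
  \sum_(i < n) H i = if (x < n)%N then H x else 0.
Proof.
move=> H0; rewrite -(@big_ord1_eq V 0 +%R H x n) [RHS]big_mkcond /=.
by apply: eq_bigr => i _; case: eqP => [-> // | /eqP ne]; rewrite H0.
Qed.

Definition box_sum a b c d h :=
  \sum_(i < a.+1) \sum_(j < b.+1) \sum_(k < c.+1) \sum_(l < d.+1) h i j k l.

Definition in_box a b c d i j k l := [&& i <= a, j <= b, k <= c & l <= d]%N.

Lemma eq_box_sum a b c d h1 h2 :
  (forall i j k l, in_box a b c d i j k l -> h1 i j k l = h2 i j k l) ->
  box_sum a b c d h1 = box_sum a b c d h2.
Proof.
move=> E; apply: eq_bigr => i _; apply: eq_bigr => j _.
apply: eq_bigr => k _; apply: eq_bigr => l _.
by apply: E; rewrite /in_box !leq_ord.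
Qed.

Lemma box_sum_eq0 a b c d h :
  (forall i j k l, in_box a b c d i j k l -> h i j k l = 0) -> box_sum a b c d h = 0.
Proof.
move=> h0; apply: big1 => i _; apply: big1 => j _; apply: big1 => k _.
by apply: big1 => l _; apply: h0; rewrite /in_box !leq_ord.
Qed.

Lemma box_sumB a b c d h1 h2 :
  box_sum a b c d h1 - box_sum a b c d h2 =
  box_sum a b c d (fun i j k l => h1 i j k l - h2 i j k l).
Proof.
rewrite /box_sum -sumrB; apply: eq_bigr => i _; rewrite -sumrB.
apply: eq_bigr => j _; rewrite -sumrB; apply: eq_bigr => k _; by rewrite -sumrB.
Qed.

Lemma box_sum_recr a b c d h :
  box_sum a.+1 b c d h = box_sum a b c d h + box_sum 0 b c d (fun _ => h a.+1).
Proof. by rewrite /box_sum big_ord_recr big_ord1. Qed.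

Lemma box_sum_diag a b c d h i0 k0 s : (i0 <= a)%N -> (k0 <= c)%N ->
  (forall i j k l, in_box a b c d i j k l ->
     [|| i != i0, k != k0 | l != j + s]%N -> h i j k l = 0) ->
  box_sum a b c d h =
  \sum_(j < b.+1) (if (j + s <= d)%N then h i0 j k0 (j + s)%N else 0).
Proof.
move=> le_i0 le_k0 h0; rewrite /box_sum (sum_ord_only1 _ i0
  (fun i => \sum_(j < b.+1) \sum_(k < c.+1) \sum_(l < d.+1) h i j k l)) ?ltnS ?le_i0;
  last first.
  move=> i lt_i ne_i; apply: big1 => j _; apply: big1 => k _; apply: big1 => l _.
  by apply: h0; rewrite ?ne_i // /in_box (ltnSE lt_i) ?leq_ord.
apply: eq_bigr => j _.
rewrite (sum_ord_only1 _ k0 (fun k => \sum_(l < d.+1) h i0 j k l)) ?ltnS ?le_k0; last first.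
  move=> k lt_k ne_k; apply: big1 => l _.
  by apply: h0; rewrite ?ne_k ?orbT // /in_box (ltnSE lt_k) le_i0 ?leq_ord /=.
rewrite (sum_ord_only1 _ (j + s)%N) ?ltnS // => l lt_l ne_l.
by apply: h0; rewrite ?ne_l ?orbT // /in_box (ltnSE lt_l) le_i0 le_k0 ?leq_ord /=.
Qed.

Lemma box_sum_point a b c d h i0 j0 k0 l0 :
  (forall i j k l, in_box a b c d i j k l ->
     [|| i != i0, j != j0, k != k0 | l != l0]%N -> h i j k l = 0) ->
  box_sum a b c d h = if in_box a b c d i0 j0 k0 l0 then h i0 j0 k0 l0 else 0.
Proof.
move=> h0; rewrite /box_sum /in_box (sum_ord_only1 _ i0
  (fun i => \sum_(j < b.+1) \sum_(k < c.+1) \sum_(l < d.+1) h i j k l)); last first.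
  move=> i lt_i ne_i; apply: big1 => j _; apply: big1 => k _; apply: big1 => l _.
  by apply: h0; rewrite ?ne_i // /in_box (ltnSE lt_i) ?leq_ord.
rewrite ltnS; case: (leqP i0 a) => //= le_i0.
rewrite (sum_ord_only1 _ j0
  (fun j => \sum_(k < c.+1) \sum_(l < d.+1) h i0 j k l)); last first.
  move=> j lt_j ne_j; apply: big1 => k _; apply: big1 => l _.
  by apply: h0; rewrite ?ne_j ?orbT // /in_box (ltnSE lt_j) le_i0 ?leq_ord.
rewrite ltnS; case: (leqP j0 b) => //= le_j0.
rewrite (sum_ord_only1 _ k0 (fun k => \sum_(l < d.+1) h i0 j0 k l)); last first.
  move=> k lt_k ne_k; apply: big1 => l _.
  by apply: h0; rewrite ?ne_k ?orbT // /in_box (ltnSE lt_k) le_i0 le_j0 ?leq_ord.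
rewrite ltnS; case: (leqP k0 c) => //= le_k0.
rewrite (sum_ord_only1 _ l0) ?ltnS // => l lt_l ne_l.
by apply: h0; rewrite ?ne_l ?orbT // /in_box (ltnSE lt_l) le_i0 le_j0 le_k0.
Qed.
End BoxSums.
Arguments box_sum {V}.

Lemma ps_mulE (R : realType) (f g : pseries R) a b c d :
  ps_mul f g a b c d = box_sum a b c d
    (fun i j k l => f i j k l * g (a - i)%N (b - j)%N (c - k)%N (d - l)%N).
Proof. by []. Qed.

Section Terms.
Variable S : pzRingType.
Implicit Types u x y : S.

Lemma term_congr u1 u2 u3 u4 x1 x2 y1 y2 :
  [\/ x1 = x2 /\ y1 = y2, x1 = 0 /\ x2 = 0 | y1 = 0 /\ y2 = 0] ->
  u1 * (u2 * x1) * (u3 * (u4 * y1)) = u1 * (u2 * x2) * (u3 * (u4 * y2)).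
Proof. by case=> [[-> ->]|[-> ->]|[-> ->]]; rewrite ?mulr0 ?mul0r. Qed.

Lemma term_eq0 u1 u2 u3 u4 x y : (x != 0 -> y != 0 -> False) ->
  u1 * (u2 * x) * (u3 * (u4 * y)) = 0.
Proof.
move=> xy0; have [->|nz_x] := eqVneq x 0; first by rewrite !mulr0 mul0r.
by have [->|nz_y] := eqVneq y 0; [rewrite !mulr0 | case: (xy0 nz_x nz_y)].
Qed.
End Terms.

Section LeviUniqueness.
Variables (R : realType) (F G : pseries R).
Hypothesis G_low : forall a b c d, (a + c <= 1)%N -> G a b c d = 0.
Hypothesis FG_boundary : forall a b c d, (a + c <= 2)%N -> (b == 0%N) || (d == 0%N) ->
  F a b c d = G a b c d.
Hypothesis G1010 : G 1 0 1 0 != 0.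
Hypothesis FG_levi : forall a b c d, (a + c <= 2)%N ->
  levi_det F a b c d = levi_det G a b c d.

Lemma levi_unique_step a b c d : (a + c <= 2)%N ->
  (forall x y z w, (x + z <= 2)%N -> (x + y + z + w < a + b + c + d + 2)%N ->
     F x y z w = G x y z w) ->
  F a b.+1 c d.+1 = G a b.+1 c d.+1.
Proof.
move=> wt IH; set n := (a + b + c + d + 2)%N.
pose known x y z w := ((x + z <= 2) && [|| x + y + z + w < n, y == 0 | w == 0])%N.
have agree x y z w : known x y z w -> F x y z w = G x y z w.
  case/andP=> wt' /or3P[lt|y0|w0]; first exact: IH.
  - by apply: FG_boundary; rewrite ?y0.
  - by apply: FG_boundary; rewrite ?w0 ?orbT.
have F1010 : F 1 0 1 0 = G 1 0 1 0 by apply: FG_boundary.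
(* Every product of the Levi coefficient other than the principal one is [settled]:
   either both factors are known, or one known factor has weight <= 1 and hence
   vanishes for F and G alike. *)
pose settled x y z w x' y' z' w' :=
  [|| known x y z w && known x' y' z' w', known x y z w && (x + z <= 1)%N
    | known x' y' z' w' && (x' + z' <= 1)%N].
have term_agree (u1 u2 u3 u4 : R[i]) x y z w x' y' z' w' :
    settled x y z w x' y' z' w' ->
    u1 * (u2 * F x y z w) * (u3 * (u4 * F x' y' z' w')) =
    u1 * (u2 * G x y z w) * (u3 * (u4 * G x' y' z' w')).
  case/or3P=> [/andP[kn kn']|/andP[kn low]|/andP[kn low]]; apply: term_congr.
  - by constructor 1; rewrite !agree.
  - by constructor 2; rewrite agree // G_low.
  - by constructor 3; rewrite agree // G_low.
have mixed_agree : ps_mul (d_zbar (d_zeta F)) (d_zetabar (d_z F)) a b c d =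
                   ps_mul (d_zbar (d_zeta G)) (d_zetabar (d_z G)) a b c d.
  rewrite !ps_mulE; apply: eq_box_sum => i j k l /and4P[? ? ? ?].
  by apply: term_agree; rewrite /settled /known; lia.
have zz_principal :
    ps_mul (d_zbar (d_z F)) (d_zetabar (d_zeta F)) a b c d -
    ps_mul (d_zbar (d_z G)) (d_zetabar (d_zeta G)) a b c d =
    F 1 0 1 0 * ((d.+1)%:R * ((b.+1)%:R * (F a b.+1 c d.+1 - G a b.+1 c d.+1))).
  rewrite !ps_mulE box_sumB (@box_sum_point _ _ _ _ _ _ 0 0 0 0); last first.
    move=> i j k l /and4P[? ? ? ?] nz; apply/eqP; rewrite subr_eq0; apply/eqP.
    by apply: term_agree; rewrite /settled /known; lia.
  rewrite /in_box !leq0n /= !subn0 /d_zbar /d_z /d_zetabar /d_zeta F1010.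
  by ring.
have := FG_levi a b c d wt; rewrite /levi_det /ps_sub mixed_agree => /eqP.
rewrite -subr_eq0 opprB addrA subrK zz_principal F1010.
rewrite !mulf_eq0 (negbTE G1010) !pnatr_eq0 /= subr_eq0 => /eqP //.
Qed.

Lemma levi_unique a b c d : (a + c <= 2)%N -> F a b c d = G a b c d.
Proof.
move=> wt; have [n] := ubnP (a + b + c + d).
elim: n a b c d wt => // n IH a b c d wt lt_n.
case: b d lt_n => [|b] [|d] lt_n; try by apply: FG_boundary.
by apply: levi_unique_step => // x y z w wt' lt'; apply: IH; lia.
Qed.
End LeviUniqueness.

Lemma levi_det_low (R : realType) (G : pseries R) :
  (forall a b c d, (a + c <= 1)%N -> G a b c d = 0) ->
  forall a b c d, (a + c <= 1)%N -> levi_det G a b c d = 0.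
Proof.
move=> G_low a b c d wt.
have low_factor x y z w x' y' z' w' : (x + z <= 1)%N || (x' + z' <= 1)%N ->
    G x y z w != 0 -> G x' y' z' w' != 0 -> False.
  by case/orP=> /G_low->; rewrite eqxx.
rewrite /levi_det /ps_sub !ps_mulE !box_sum_eq0 ?subrr // => i j k l /and4P[? ? ? ?];
  by apply: term_eq0; apply: low_factor; lia.
Qed.

Section ConvolutionSums.
Local Open Scope nat_scope.

Lemma sum_succ n : 2 * \sum_(j < n.+1) j.+1 = n.+1 * n.+2.
Proof. by elim: n => [|n IH]; rewrite ?big_ord1 // big_ord_recr /= mulnDr IH; nia. Qed.

Lemma sum_rev_rising n : 3 * \sum_(j < n.+1) ((n - j).+2 * (n - j).+1) = n.+1 * n.+2 * n.+3.
Proof. by elim: n => [|n IH]; rewrite ?big_ord1 // big_ord_recl mulnDr IH subn0; nia. Qed.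

Lemma sum_conv n : 6 * \sum_(j < n.+1) (j.+1 * (n - j).+1) = n.+1 * n.+2 * n.+3.
Proof.
elim: n => [|n IH]; first by rewrite big_ord1.
rewrite big_ord_recr /= subnn.
under eq_bigr => j _ do rewrite subSn ?leq_ord // mulnS.
rewrite big_split /=; move: IH (sum_succ n).
set X := \sum_(j < n.+1) _ * _; set Y := \sum_(j < n.+1) _.+1; nia.
Qed.

Lemma sum_rev_sq n : 6 * \sum_(j < n.+1) ((n - j).+1 * (n - j).+1) = n.+1 * n.+2 * (2 * n + 3).
Proof. by elim: n => [|n IH]; rewrite ?big_ord1 // big_ord_recl mulnDr IH subn0; nia. Qed.

Lemma sum_conv_pred n : 6 * \sum_(j < n.+1) (j.+1 * (n - j)) = n * n.+1 * n.+2.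
Proof.
case: n => [|n]; first by rewrite big_ord1.
rewrite big_ord_recr /= subnn muln0 addn0 -sum_conv.
by congr (6 * _); apply: eq_bigr => j _; rewrite subSn ?leq_ord.
Qed.

Lemma sum_rev_rising_conv n :
  \sum_(j < n.+1) ((n - j).+2 * (n - j).+1) = 2 * \sum_(j < n.+1) (j.+1 * (n - j).+1).
Proof. by move: (sum_rev_rising n) (sum_conv n); lia. Qed.

Lemma sum_rev_sq_conv n : \sum_(j < n.+1) ((n - j).+1 * (n - j).+1) =
  \sum_(j < n.+1) (j.+1 * (n - j)) + \sum_(j < n.+1) (j.+1 * (n - j).+1).
Proof. by move: (sum_rev_sq n) (sum_conv_pred n) (sum_conv n); nia. Qed.

End ConvolutionSums.

Section Model.
Variable R : realType.

Definition mcoef : pseries R := fun a b c d =>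
  match a, c with
  | 1%N, 1%N => if b == d then 1 else 0
  | 2%N, 0%N => if d == b.+1 then 2^-1 else 0
  | 0%N, 2%N => if b == d.+1 then 2^-1 else 0
  | _, _ => 0
  end.

Lemma mcoef_supp a b c d : mcoef a b c d != 0 ->
  [\/ [/\ a = 1, c = 1 & b = d], [/\ a = 2, c = 0 & d = b.+1]
    | [/\ a = 0, c = 2 & b = d.+1]]%N.
Proof.
rewrite /mcoef; case: a c => [|[|[|a]]] [|[|[|c]]]; rewrite ?eqxx //.
all: case: ifP => [/eqP-> _|]; rewrite ?eqxx //.
all: by [constructor 1 | constructor 2 | constructor 3].
Qed.

Lemma mcoef_off2 a b c d : (a + c != 2)%N -> mcoef a b c d = 0.
Proof. by case: a c => [|[|[|a]]] [|[|[|c]]]. Qed.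

Lemma m_num_supp i j k l : @m_num R i j k l != 0 ->
  [\/ [/\ i = 1, j = 0, k = 1 & l = 0], [/\ i = 2, j = 0, k = 0 & l = 1]
    | [/\ i = 0, j = 1, k = 2 & l = 0]]%N.
Proof.
move=> nz.
have [/and4P[/eqP-> /eqP-> /eqP-> /eqP->]|n1] := boolP [&& i == 1, j == 0, k == 1 & l == 0]%N.
  by constructor 1.
have [/and4P[/eqP-> /eqP-> /eqP-> /eqP->]|n2] := boolP [&& i == 2, j == 0, k == 0 & l == 1]%N.
  by constructor 2.
have [/and4P[/eqP-> /eqP-> /eqP-> /eqP->]|n3] := boolP [&& i == 0, j == 1, k == 2 & l == 0]%N.
  by constructor 3.
by move: nz; rewrite /m_num (negbTE n1) (negbTE n2) (negbTE n3) !addr0 eqxx.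
Qed.

Lemma m_seriesE a b c d : @m_series R a b c d = mcoef a b c d.
Proof.
rewrite [LHS](_ : _ = box_sum a b c d (fun i j k l =>
  @m_num R i j k l * @geom_zz R (a - i)%N (b - j)%N (c - k)%N (d - l)%N)) //.
(* Only the monomial z^a zeta^[c == 2] zbar^c zetabar^[a == 2] of the numerator can
   meet a term of the geometric series. *)
rewrite (@box_sum_point _ a b c d _ a (c == 2%N) c (a == 2%N)); last first.
  move=> i j k l; rewrite /in_box /geom_zz => /and4P[le_i le_j le_k le_l] ne.
  have [->|/m_num_supp supp] := eqVneq (@m_num R i j k l) 0; first by rewrite mul0r.
  case: and3P => [[/eqP ai /eqP ck _]|]; rewrite ?mulr0 //.
  move: ne; have ->: a = i by lia. have ->: c = k by lia.
  by case: supp => -[-> -> -> ->].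
rewrite /in_box /m_num /geom_zz /mcoef !subnn !leqnn /=.
case: a c => [|[|[|a]]] [|[|[|c]]] //=; rewrite ?addr0 ?add0r ?mul0r ?if_same //.
all: rewrite ?subn0 ?subn1 ?mul1r //.
- by case: b => [|b] //=; rewrite eqSS; case: eqP; rewrite ?mulr1 ?mulr0.
- by case: d => [|d] //=; rewrite eqSS eq_sym; case: eqP; rewrite ?mulr1 ?mulr0.
Qed.

Ltac mcoef_term0 := apply: term_eq0 =>
  /mcoef_supp[[? ? ?]|[? ? ?]|[? ? ?]] /mcoef_supp[[? ? ?]|[? ? ?]|[? ? ?]]; lia.

Lemma levi_mcoef20 b d : levi_det mcoef 2%N b 0%N d = 0.
Proof.
rewrite /levi_det /ps_sub !ps_mulE.
have [->|ne] := eqVneq d b.+1; last first.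
  by rewrite !box_sum_eq0 ?subrr // => i j k l /and4P[? ? ? ?]; mcoef_term0.
rewrite (@box_sum_diag _ 2 b 0 b.+1 _ 0 0 0) //; last first.
  by move=> i j k l /and4P[? ? ? ?] ?; mcoef_term0.
rewrite (@box_sum_diag _ 2 b 0 b.+1 _ 1 0 1) //; last first.
  by move=> i j k l /and4P[? ? ? ?] ?; mcoef_term0.
rewrite (eq_bigr (fun j : 'I_b.+1 => ((b - j).+2 * (b - j).+1)%:R / 2)); last first.
  move=> j _; rewrite addn0 leqW ?leq_ord // /d_zbar /d_z /d_zetabar /d_zeta /mcoef /=.
  by rewrite eqxx subSn ?leq_ord // eqxx natrM; ring.
rewrite [X in _ - X](eq_bigr (fun j : 'I_b.+1 => (j.+1 * (b - j).+1)%:R)); last first.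
  move=> j _; rewrite addn1 ltnS leq_ord /d_zbar /d_z /d_zetabar /d_zeta /mcoef /=.
  by rewrite subSS !eqxx subn1 /= natrM; field.
rewrite -mulr_suml -!natr_sum sum_rev_rising_conv natrM mulrAC.
by rewrite divff ?pnatr_eq0 // mul1r subrr.
Qed.

Lemma levi_mcoef02 b d : levi_det mcoef 0%N b 2%N d = 0.
Proof.
rewrite /levi_det /ps_sub !ps_mulE.
have [->|ne] := eqVneq b d.+1; last first.
  by rewrite !box_sum_eq0 ?subrr // => i j k l /and4P[? ? ? ?]; mcoef_term0.
rewrite (@box_sum_diag _ 0 d.+1 2 d _ 0 0 0) //; last first.
  by move=> i j k l /and4P[? ? ? ?] ?; mcoef_term0.
rewrite (@box_sum_diag _ 0 d.+1 2 d _ 0 1 0) //; last first.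
  by move=> i j k l /and4P[? ? ? ?] ?; mcoef_term0.
rewrite big_ord_recr [X in _ - X]big_ord_recr /= !addn0 ltnn !addr0.
rewrite (eq_bigr (fun j : 'I_d.+1 => ((d - j).+2 * (d - j).+1)%:R / 2)); last first.
  move=> j _; rewrite addn0 leq_ord /d_zbar /d_z /d_zetabar /d_zeta /mcoef /=.
  by rewrite eqxx subSn ?leq_ord // eqxx natrM; ring.
rewrite [X in _ - X](eq_bigr (fun j : 'I_d.+1 => (j.+1 * (d - j).+1)%:R)); last first.
  move=> j _; rewrite addn0 leq_ord /d_zbar /d_z /d_zetabar /d_zeta /mcoef /=.
  by rewrite !eqxx subSn ?leq_ord // eqxx subn0 natrM; field.
rewrite -mulr_suml -!natr_sum sum_rev_rising_conv natrM mulrAC.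
by rewrite divff ?pnatr_eq0 // mul1r subrr.
Qed.

Lemma levi_mcoef11 b d : levi_det mcoef 1%N b 1%N d = 0.
Proof.
rewrite /levi_det /ps_sub !ps_mulE.
have [->|ne] := eqVneq b d; last first.
  by rewrite !box_sum_eq0 ?subrr // => i j k l /and4P[? ? ? ?]; mcoef_term0.
rewrite (@box_sum_diag _ 1 d 1 d _ 0 0 0) //; last first.
  by move=> i j k l /and4P[? ? ? ?] ?; mcoef_term0.
rewrite [X in _ - X]box_sum_recr (@box_sum_diag _ 0 d 1 d _ 0 1 0) //; last first.
  by move=> i j k l /and4P[? ? ? ?] ?; mcoef_term0.
rewrite (@box_sum_diag _ 0 d 1 d _ 0 0 1) //; last first.
  by move=> i j k l /and4P[? ? ? ?] ?; mcoef_term0.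
rewrite (eq_bigr (fun j : 'I_d.+1 => ((d - j).+1 * (d - j).+1)%:R)); last first.
  move=> j _; rewrite addn0 leq_ord /d_zbar /d_z /d_zetabar /d_zeta /mcoef /=.
  by rewrite !eqxx natrM; field.
rewrite [X in _ - (X + _)](eq_bigr (fun j : 'I_d.+1 => (j.+1 * (d - j).+1)%:R)); last first.
  move=> j _; rewrite addn0 leq_ord /d_zbar /d_z /d_zetabar /d_zeta /mcoef /=.
  by rewrite !eqxx subn0 natrM; field.
rewrite [X in _ - (_ + X)](eq_bigr (fun j : 'I_d.+1 => (j.+1 * (d - j))%:R)); last first.
  move=> j _; rewrite addn1 /d_zbar /d_z /d_zetabar /d_zeta /mcoef /=.
  case: ltnP => [lt_jd|le_dj]; last by rewrite (_ : d - j = 0)%N ?muln0 //; lia.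
  by rewrite subnSK // subnn !eqxx natrM; ring.
by rewrite -!natr_sum -natrD sum_rev_sq_conv addnC subrr.
Qed.

Lemma levi_mcoef a b c d : (a + c <= 2)%N -> levi_det mcoef a b c d = 0.
Proof.
move=> wt; have [low|] := leqP (a + c) 1.
  by apply: levi_det_low low => x y z w low'; rewrite mcoef_off2 //; lia.
case: a c wt => [|[|[|a]]] [|[|[|c]]] //= _ _.
- exact: levi_mcoef02.
- exact: levi_mcoef11.
- exact: levi_mcoef20.
Qed.

Lemma prenormalized_boundary (F : pseries R) : real_valued F -> prenormalized F ->
  forall a b c d, (a + c <= 2)%N -> (b == 0%N) || (d == 0%N) -> F a b c d = mcoef a b c d.
Proof.
have conj_id (p q : bool) : conjc ((if p then 1 else 0) + (if q then 2^-1 else 0) : R[i]) =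
                             (if p then 1 else 0) + (if q then 2^-1 else 0).
  by rewrite rmorphD; case: p; case: q; rewrite ?rmorph0 ?rmorph1 ?fmorphV ?rmorph_nat.
move=> Freal Fpre a b c d wt /orP[/eqP-> | /eqP->].
  rewrite -Freal Fpre ?conj_id; last lia.
  by case: a c wt => [|[|[|a]]] [|[|[|c]]] //= _; case: d => [|[|d]]; rewrite ?addr0 ?add0r.
rewrite Fpre; last lia.
by case: a c wt => [|[|[|a]]] [|[|[|c]]] //= _; case: b => [|[|b]]; rewrite ?addr0 ?add0r.
Qed.
End Model.

Theorem proposition5p7 (R : realType) (F : pseries R) :
  convergent F ->
  real_valued F ->
  F 0%N 0%N 0%N 0%N = 0 ->
  (forall a b c d, levi_det F a b c d = 0) ->
  prenormalized F ->
  forall a b c d, ps_sub F (@m_series R) a b c d != 0 -> (3 <= a + c)%N.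
Proof.
move=> _ Freal _ Flevi Fpre a b c d.
rewrite /ps_sub m_seriesE leqNgt; apply: contra => wt.
rewrite (@levi_unique R F (@mcoef R)) ?subrr //.
- by move=> x y z w low; rewrite mcoef_off2 //; lia.
- exact: prenormalized_boundary.
- by rewrite /mcoef oner_eq0.
- by move=> x y z w wt'; rewrite Flevi levi_mcoef.
Qed.
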